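(* Let $\Pi$ be a non-negative projector on $\mathcal{Q}^n$ and suppose $\Pi|\psi\rangle=|\psi\rangle$ for some non-negative state $|\psi\rangle$. Then for any $x\in\mathcal{S}(\psi)$: (1) $\langle x|\Pi|x\rangle>0$; (2) if $\langle x|\Pi|y\rangle>0$ for some $y\in\{0,1\}^n$, then $y\in\mathcal{S}(\psi)$ and $$\frac{\langle y|\psi\rangle}{\langle x|\psi\rangle}=\sqrt{\frac{\langle y|\Pi|y\rangle}{\langle x|\Pi|x\rangle}}.$$
   Context: $\mathcal{Q}^n=(\mathbb{C}^2)^{\otimes n}$ with standard basis $\{|x\rangle\}$, $x\in\{0,1\}^n$. A non-negative projector is a Hermitian projector whose standard-basis matrix has real non-negative entries. A non-negative state is a normalized vector with real non-negative amplitudes in the standard basis. For such a state, its support is $\mathcal{S}(\psi)=\{x\in\{0,1\}^n:\langle x|\psi\rangle>0\}$. *)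

(* The Hilbert space Q^n = (C^2)^{(x)n} is modelled by
   column vectors 'cV[C]_(2^n); the standard basis vector |x>, x in {0,1}^n,
   is indexed by the ordinal 'I_(2^n) whose binary expansion is x.
   C is any numClosedFieldType (e.g. algC); in such a field  0 <= z  means
   z is real and non-negative. *)
From mathcomp Require Import all_boot all_order all_algebra.
Set Implicit Arguments. Unset Strict Implicit. Unset Printing Implicit Defensive.
Import Order.TTheory GRing.Theory Num.Theory.
Local Open Scope ring_scope.

Notation basis n := ('I_(2 ^ n)).

Definition adjmx (C : numClosedFieldType) (m : nat) (A : 'M[C]_m) : 'M[C]_m :=
  map_mx Num.conj A^T.

Definition nonneg_projector (C : numClosedFieldType) (n : nat)
    (P : 'M[C]_(2 ^ n)) : Prop :=
  [/\ adjmx P = P, P *m P = P & forall x y : basis n, 0 <= P x y].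

Definition nonneg_state (C : numClosedFieldType) (n : nat)
    (psi : 'cV[C]_(2 ^ n)) : Prop :=
  (forall x : basis n, 0 <= psi x 0) /\
  \sum_(x < 2 ^ n) `|psi x 0| ^+ 2 = 1.

Definition support_state (C : numClosedFieldType) (n : nat)
    (psi : 'cV[C]_(2 ^ n)) : pred (basis n) :=
  fun x => 0 < psi x 0.

(* Write [a := |v|] for a vector fixed by the symmetric non-negative
   idempotent [P].  Then [a <= P a] entrywise, while [(P a)^T (P a) = a^T P a],
   so the sum of the non-negative terms [(P a)_z ((P a)_z - a_z)] vanishes and
   [|v|] is fixed as well: the support of a fixed vector is closed under the
   graph of [P].  For [P x y > 0], the vector
   [v = P (P x y e_y - P y y e_x)] is fixed and vanishes at [y], hence at [x];
   then [v^T v = P x y v_y - P y y v_x = 0], so the columns [x] and [y] of [P]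
   are proportional.  Pairing with [psi = P psi] gives
   [P x y psi_y = P y y psi_x], and reading the proportionality at row [x]
   gives [P x y ^ 2 = P x x P y y], whence the square-root formula. *)
From mathcomp Require Import all_boot all_order all_algebra.
From mathcomp Require Import ring.
Set Implicit Arguments. Unset Strict Implicit. Unset Printing Implicit Defensive.
Import Order.TTheory GRing.Theory Num.Theory.
Local Open Scope ring_scope.

Lemma nonneg_projector_trmx (C : numClosedFieldType) (n : nat)
    (P : 'M[C]_(2 ^ n)) :
  nonneg_projector P -> P^T = P.
Proof.
case=> adjP _ P_ge0; apply/matrixP => i j.
by rewrite -{2}adjP /adjmx !mxE geC0_conj.
Qed.

Lemma trmx_mul00E (R : pzSemiRingType) m (u w : 'cV[R]_m) :
  (u^T *m w) 0 0 = \sum_k u k 0 * w k 0.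
Proof. by rewrite mxE; apply: eq_bigr => k _; rewrite mxE. Qed.

Section NonnegIdempotent.

Variables (C : numClosedFieldType) (m : nat) (P : 'M[C]_m).
Hypotheses (trP : P^T = P) (idemP : P *m P = P) (P_ge0 : forall i j, 0 <= P i j).

Lemma nnidem_sym i j : P i j = P j i.
Proof. by rewrite -{1}trP mxE. Qed.

Lemma nnidem_trmx_mul_fixed (c w : 'cV[C]_m) :
  P *m w = w -> (P *m c)^T *m w = c^T *m w.
Proof. by move=> Pw; rewrite trmx_mul trP -mulmxA Pw. Qed.

Lemma nnidem_fixed_norm (v : 'cV[C]_m) :
  P *m v = v -> P *m map_mx (fun z => `|z|) v = map_mx (fun z => `|z|) v.
Proof.
move=> Pv; set a := map_mx _ v; set b := P *m a.
have a_ge0 z : 0 <= a z 0 by rewrite mxE.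
have a_le_b z : a z 0 <= b z 0.
  rewrite !mxE -{1}Pv mxE; apply: le_trans (ler_norm_sum _ _ _) _.
  by apply: ler_sum => k _; rewrite normrM ger0_norm // mxE.
have term_ge0 z : 0 <= b z 0 * (b z 0 - a z 0).
  by rewrite mulr_ge0 ?subr_ge0 // (le_trans (a_ge0 z)).
have sum0 : \sum_z b z 0 * (b z 0 - a z 0) = 0.
  have Pb : P *m b = b by rewrite mulmxA idemP.
  have := congr1 (fun M : 'M[C]_1 => M 0 0) (nnidem_trmx_mul_fixed a Pb).
  rewrite /= !trmx_mul00E => gram.
  rewrite (eq_bigr (fun z => b z 0 * b z 0 - a z 0 * b z 0)) => [|z _]; last by ring.
  by rewrite sumrB gram subrr.
apply/matrixP => z j; rewrite (ord1 j).
have /eqP := @psumr_eq0P _ _ predT _ (fun z _ => term_ge0 z) sum0 z isT.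
rewrite mulf_eq0 subr_eq0 => /orP[/eqP b0 | /eqP //].
by apply/eqP; rewrite eq_le a_le_b b0 a_ge0.
Qed.

Lemma nnidem_fixed_neighbor (v : 'cV[C]_m) x y :
  P *m v = v -> 0 < P x y -> v y 0 != 0 -> v x 0 != 0.
Proof.
move=> Pv Pxy vy; rewrite -normr_gt0.
have -> : `|v x 0| = \sum_k P x k * `|v k 0|.
  have /matrixP/(_ x 0) := nnidem_fixed_norm Pv; rewrite !mxE => <-.
  by apply: eq_bigr => k _; rewrite mxE.
rewrite (bigD1 y) //=; apply: (lt_le_trans (y := P x y * `|v y 0|)).
  by rewrite mulr_gt0 ?normr_gt0.
by rewrite lerDl sumr_ge0 // => k _; rewrite mulr_ge0.
Qed.

Lemma nnidem_diag_gt0 (v : 'cV[C]_m) x :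
  P *m v = v -> v x 0 != 0 -> 0 < P x x.
Proof.
move=> Pv vx; rewrite lt_def P_ge0 andbT; apply: contra vx => /eqP Pxx0.
have row0 j : P x j = 0.
  have sum0 : \sum_j P x j * P x j = 0.
    rewrite -[RHS]Pxx0 -[in RHS]idemP mxE.
    by apply: eq_bigr => k _; rewrite (nnidem_sym k x).
  have /eqP := @psumr_eq0P _ _ predT _ (fun k _ => mulr_ge0 (P_ge0 x k) (P_ge0 x k)) sum0 j isT.
  by rewrite mulf_eq0 orbb => /eqP.
by rewrite -Pv mxE big1 // => j _; rewrite row0 mul0r.
Qed.

Lemma nnidem_col_proportional x y :
  0 < P x y -> forall z, P x y * P z y = P y y * P z x.
Proof.
move=> Pxy.
set c : 'cV[C]_m := P x y *: delta_mx y 0 - P y y *: delta_mx x 0.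
set v := P *m c.
have vE z : v z 0 = P x y * P z y - P y y * P z x.
  by rewrite /v /c mulmxBr -!scalemxAr -!colE !mxE.
have Pv : P *m v = v by rewrite /v mulmxA idemP.
have vy : v y 0 = 0 by rewrite vE (nnidem_sym y x) mulrC subrr.
have vx : v x 0 = 0.
  have Pyx : 0 < P y x by rewrite nnidem_sym.
  by apply/eqP; case: eqP => // /eqP /(nnidem_fixed_neighbor Pv Pyx); rewrite vy eqxx.
have sum0 : \sum_z v z 0 * v z 0 = 0.
  rewrite -trmx_mul00E {1}/v nnidem_trmx_mul_fixed //; clearbody v.
  rewrite -[c^T *m v]trmxK trmx_mul trmxK mxE /c mulmxBr -!scalemxAr -!colE !mxE.
  by rewrite vx vy !mulr0 subrr.
have sq_ge0 z : 0 <= v z 0 * v z 0.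
  by rewrite -expr2 -realEsqr vE rpredB // rpredM // ger0_real.
move=> z; apply/eqP; rewrite -subr_eq0 -vE.
have /eqP := @psumr_eq0P _ _ predT _ (fun z _ => sq_ge0 z) sum0 z isT.
by rewrite mulf_eq0 orbb.
Qed.

Lemma nnidem_fixed_ratio (v : 'cV[C]_m) x y :
  P *m v = v -> 0 < P x y -> P x y * v y 0 = P y y * v x 0.
Proof.
move=> Pv Pxy; have vE z : v z 0 = \sum_k P z k * v k 0 by rewrite -{1}Pv mxE.
rewrite (vE y) (vE x) !mulr_sumr; apply: eq_bigr => k _.
by rewrite !mulrA (nnidem_sym y k) (nnidem_sym x k) nnidem_col_proportional.
Qed.

End NonnegIdempotent.

Theorem lemma4p4 (C : numClosedFieldType) (n : nat)
    (P : 'M[C]_(2 ^ n)) (psi : 'cV[C]_(2 ^ n)) :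
  nonneg_projector P -> nonneg_state psi -> P *m psi = psi ->
  forall x : 'I_(2 ^ n), x \in support_state psi ->
    0 < P x x /\
    (forall y : 'I_(2 ^ n), 0 < P x y ->
       y \in support_state psi /\
       psi y 0 / psi x 0 = sqrtC (P y y / P x x)).
Proof.
move=> projP [psi_ge0 _] Ppsi x psix.
have trP := nonneg_projector_trmx projP; case: projP => _ idemP P_ge0.
have psix0 : psi x 0 != 0 by rewrite gt_eqF.
have Pxx := nnidem_diag_gt0 trP idemP P_ge0 Ppsi psix0.
split=> // y Pxy.
have Pyx : 0 < P y x by rewrite (nnidem_sym trP).
have psiy0 := nnidem_fixed_neighbor trP idemP P_ge0 Ppsi Pyx psix0.
have Pxy2 := nnidem_col_proportional trP idemP P_ge0 Pxy x.
have ratio := nnidem_fixed_ratio trP idemP P_ge0 Ppsi Pxy.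
have Pyy : 0 < P y y.
  rewrite lt_def P_ge0 andbT; apply/eqP => Pyy0.
  by move/eqP: Pxy2; rewrite Pyy0 mul0r mulf_eq0 orbb gt_eqF.
split; first by change (0 < psi y 0); rewrite lt_def psiy0 psi_ge0.
have -> : psi y 0 / psi x 0 = P y y / P x y.
  by apply/eqP; rewrite eqr_div ?(gt_eqF Pxy) // (mulrC (psi y 0)) ratio.
have -> : P y y / P x x = (P y y / P x y) ^+ 2.
  apply/eqP; rewrite expr_div_n eqr_div ?expf_neq0 ?(gt_eqF Pxx) ?(gt_eqF Pxy) //.
  by rewrite expr2 Pxy2; apply/eqP; ring.
by rewrite sqrCK // divr_ge0.
Qed.
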